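(* Let $\Sigma$ be a simply connected non-planar minimal surface in $\mathbb{R}^3$, parametrized (up to translations) by the conformal harmonic immersion \[ \mathbf{X}(\zeta)=\Big(\mathrm{Re}\int\phi_1(\zeta)\,d\zeta,\ \mathrm{Re}\int\phi_2(\zeta)\,d\zeta,\ \mathrm{Re}\int\phi_3(\zeta)\,d\zeta\Big), \] where $\zeta$ is a conformal coordinate and the holomorphic null curve $\phi=(\phi_1,\phi_2,\phi_3)$ is given in terms of Weierstrass data $(G(\zeta),\Psi(\zeta)\,d\zeta)$ ($G$ meromorphic, $\Psi\,d\zeta$ a holomorphic one-form) by \[ \phi=\Big(\tfrac12(1-G^2)\Psi,\ \tfrac{i}{2}(1+G^2)\Psi,\ G\Psi\Big). \] Let $c\in\mathbb{C}$ be a constant and define the holomorphic curve $\widehat{\phi}=(\widehat{\phi}_0,\widehat{\phi}_1,\widehat{\phi}_2,\widehat{\phi}_3)$ by \[ \widehat{\phi}=\Big(c\,G^2\Psi,\ \tfrac12\big(1+(c^2-1)G^2\big)\Psi,\ \tfrac{i}{2}\big(1+(c^2+1)G^2\big)\Psi,\ G\Psi\Big). \] Then there exists a minimal surface $\Sigma^c$ in $\mathbb{R}^4$, parametrized (up to translations) by the conformal harmonic immersion \[ \mathbf{X}^c(\zeta)=\Big(\mathrm{Re}\int\widehat{\phi}_0\,d\zeta,\ \mathrm{Re}\int\widehat{\phi}_1\,d\zeta,\ \mathrm{Re}\int\widehat{\phi}_2\,d\zeta,\ \mathrm{Re}\int\widehat{\phi}_3\,d\zeta\Big). \] The metric induced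 on $\Sigma^c$ by $\mathbf{X}^c$ is \[ g_{\Sigma^c}=\frac14\Big(|\Psi|^2\,|1+c^2G^2|^2\Big(1+\frac{|G|^2}{|1+icG|^2}\Big)\Big(1+\frac{|G|^2}{|1-icG|^2}\Big)\Big)|d\zeta|^2 . \] Moreover $\widehat{\phi}_0+c\,\widehat{\phi}_1+ic\,\widehat{\phi}_2=0$, and consequently the minimal surface $\Sigma^c$ in $\mathbb{R}^4$ is degenerate.
   Context: For a conformal harmonic immersion $\mathbf{X}:\Sigma\to\mathbb{R}^4$ with local conformal coordinate $\zeta$, its Gauss map is $\mathcal{G}(\zeta)=[\partial\mathbf{X}/\partial\zeta]=[\phi_0:\phi_1:\phi_2:\phi_3]\in\mathbb{CP}^3$, where $(\phi_0,\ldots,\phi_3)=2\,d\mathbf{X}/d\zeta$; it takes values in the quadric $\{z_0^2+z_1^2+z_2^2+z_3^2=0\}\subset\mathbb{CP}^3$. The minimal surface is called degenerate if the image of its Gauss map lies in a hyperplane of $\mathbb{CP}^3$. A holomorphic curve $(\phi_k)$ is null if $\sum_k\phi_k^2=0$; the real parts of integrals of a holomorphic null curve give a conformal harmonic map, with induced metric $\frac12\sum_k|\phi_k|^2|d\zeta|^2$. *)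

From HB Require Import structures.
From mathcomp Require Import all_boot all_order all_algebra.
From mathcomp Require Import all_classical all_reals all_analysis.
From mathcomp Require Export complex.
Export Order.TTheory GRing.Theory Num.Theory.
Export numFieldNormedType.Exports.

Set Implicit Arguments.
Unset Strict Implicit.
Unset Printing Implicit Defensive.

Local Open Scope ring_scope.
Local Open Scope classical_set_scope.

(* The complex plane C = R[i], seen as a normed space over itself
   (so that [derivable f z 1] is complex differentiability). *)
Definition C (R : realType) := (R[i])^o.

Section Defs.
Variable R : realType.
Local Notation C := (C R).

Definition holomorphic_on (V : set C) (f : C -> C) : Prop :=
  forall z, V z -> derivable f z 1.

Definition primitive_on (V : set C) (F f : C -> C) : Prop :=
  forall z, V z -> is_derive z (1 : C) F (f z).

Definition loop_in (V : set C) (g : R -> C) : Prop :=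
  [/\ {within `[0, 1], continuous g}, g 0 = g 1 &
      forall s, `[0, 1] s -> V (g s)].

Definition null_homotopic_in (V : set C) (g : R -> C) : Prop :=
  exists H : R * R -> C,
    [/\ {within `[0, 1] `*` `[0, 1], continuous H},
        (forall s t, `[0, 1] s -> `[0, 1] t -> V (H (s, t))),
        (forall s, `[0, 1] s -> H (s, 0) = g s /\ H (s, 1) = g 0) &
        (forall t, `[0, 1] t -> H (0, t) = g 0 /\ H (1, t) = g 0)].

Definition simply_connected_domain (V : set C) : Prop :=
  [/\ open V, V !=set0, connected V &
      forall g, loop_in V g -> null_homotopic_in V g].

Definition meromorphic_on (V P : set C) (G : C -> C) : Prop :=
  [/\ P `<=` V,
      (forall z, V z -> \forall w \near z^', ~ P w),
      holomorphic_on (V `\` P) G &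
      (forall p, P p -> (fun w => (G w)^-1) @ p^' --> (0 : C))].

Definition nonplanar3 (V : set C) (Phi1 Phi2 Phi3 : C -> C) : Prop :=
  ~ exists a1 a2 a3 d : R,
      ~ (a1 = 0 /\ a2 = 0 /\ a3 = 0) /\
      forall z, V z ->
        a1 * complex.Re (Phi1 z) + a2 * complex.Re (Phi2 z) + a3 * complex.Re (Phi3 z) = d.

Definition induced_metric4 (ph0 ph1 ph2 ph3 : C -> C) (z : C) : C :=
  2^-1 * (`|ph0 z| ^+ 2 + `|ph1 z| ^+ 2 + `|ph2 z| ^+ 2 + `|ph3 z| ^+ 2).

(* The minimal surface Re \int (ph0,..,ph3) in R^4 is degenerate: the image
   of its Gauss map [ph0 : ph1 : ph2 : ph3] lies in a hyperplane of CP^3. *)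
Definition degenerate4 (V : set C) (ph0 ph1 ph2 ph3 : C -> C) : Prop :=
  exists a0 a1 a2 a3 : C,
    ~ (a0 = 0 /\ a1 = 0 /\ a2 = 0 /\ a3 = 0) /\
    forall z, V z -> a0 * ph0 z + a1 * ph1 z + a2 * ph2 z + a3 * ph3 z = 0.

End Defs.

From HB Require Import structures.
From mathcomp Require Import all_boot all_order all_algebra.
From mathcomp Require Import all_classical all_reals all_analysis ring.
From mathcomp Require Import complex.
Import Order.TTheory GRing.Theory Num.Theory.
Import numFieldNormedType.Exports.
Local Open Scope ring_scope.
Local Open Scope classical_set_scope.

(* Since phi1 = (1 - G^2) Psi / 2 and phi2 = i (1 + G^2) Psi / 2, the combination
   s = phi1 + i phi2 equals -G^2 Psi.  Hence
     phi-hat = (-c s, phi1 - (c^2/2) s, phi2 - (i c^2/2) s, phi3)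
   is holomorphic on the whole domain, across the poles of G, and its primitives
   are the same combinations of those of phi.  In these coordinates the sum of
   squares of phi-hat is that of phi, which vanishes off the discrete pole set
   and hence everywhere by continuity; phi-hat0 + c phi-hat1 + i c phi-hat2 = 0
   identically; and phi-hat vanishes only where phi does.  The metric follows
   from 1 + c^2 G^2 = (1 + i c G)(1 - i c G) and the parallelogram law. *)

Lemma continuous_eq_off_discrete {K : numFieldType} {V : normedModType K}
    {U P : set K^o} {f : K^o -> V} {a : V} : open U ->
  (forall z, U z -> \forall w \near z^', ~ P w) ->
  (forall z, U z -> {for z, continuous f}) ->
  (forall z, (U `\` P) z -> f z = a) -> forall z, U z -> f z = a.
Proof.
move=> oU Pdisc fcont fa z Uz.
have Unear : \forall w \near z^', U w.
  by apply: cvg_within; exact: open_nbhs_nbhs.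
have f_near_a : \forall w \near z^', f w = a.
  by near=> w; apply: fa; split; near: w; [exact: Unear | exact: Pdisc].
have f_lim : f @ z^' --> f z by apply: cvg_within_filter; exact: fcont.
exact: cvg_unique f_lim (cvg_near_cst _ f_near_a).
Unshelve. all: by end_near.
Qed.

Lemma normC_parallelogram (F : numClosedFieldType) (a b : F) :
  `|a + b| ^+ 2 + `|a - b| ^+ 2 = 2 * (`|a| ^+ 2 + `|b| ^+ 2).
Proof. by rewrite !normCK rmorphD rmorphB; ring. Qed.

Section LiftedCurve.
Context {F : numClosedFieldType} (c : F).

Lemma weierstrass_null (g p : F) :
  (2^-1 * (1 - g ^+ 2) * p) ^+ 2 + ('i / 2 * (1 + g ^+ 2) * p) ^+ 2
    + (g * p) ^+ 2 = 0.
Proof. by field: (@sqrCi F). Qed.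

Section Coordinates.
Context {x y : F}.
Local Notation s := (x + 'i * y).

Lemma lift_sqr_sum (w : F) :
  (- c * s) ^+ 2 + (x - c ^+ 2 / 2 * s) ^+ 2 + (y - 'i * c ^+ 2 / 2 * s) ^+ 2
    + w ^+ 2 = x ^+ 2 + y ^+ 2 + w ^+ 2.
Proof. by field: (@sqrCi F). Qed.

Lemma lift_degenerate :
  - c * s + c * (x - c ^+ 2 / 2 * s) + 'i * c * (y - 'i * c ^+ 2 / 2 * s) = 0.
Proof. by field: (@sqrCi F). Qed.

Lemma lift_eq0 :
  x - c ^+ 2 / 2 * s = 0 -> y - 'i * c ^+ 2 / 2 * s = 0 -> x = 0 /\ y = 0.
Proof.
move=> ex ey.
have s_eq : s = (x - c ^+ 2 / 2 * s) + 'i * (y - 'i * c ^+ 2 / 2 * s).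
  by field: (@sqrCi F).
rewrite ex ey mulr0 addr0 in s_eq.
by move: ex ey; rewrite s_eq !mulr0 !subr0.
Qed.

Lemma lift_weierstrass {g p : F} :
  x = 2^-1 * (1 - g ^+ 2) * p -> y = 'i / 2 * (1 + g ^+ 2) * p ->
  [/\ - c * s = c * g ^+ 2 * p,
      x - c ^+ 2 / 2 * s = 2^-1 * (1 + (c ^+ 2 - 1) * g ^+ 2) * p &
      y - 'i * c ^+ 2 / 2 * s = 'i / 2 * (1 + (c ^+ 2 + 1) * g ^+ 2) * p].
Proof. by move=> -> ->; split; field: (@sqrCi F). Qed.

End Coordinates.

Lemma lift_metric (g p : F) :
  1 + 'i * c * g != 0 -> 1 - 'i * c * g != 0 ->
  2^-1 * (`|c * g ^+ 2 * p| ^+ 2 + `|2^-1 * (1 + (c ^+ 2 - 1) * g ^+ 2) * p| ^+ 2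
     + `|'i / 2 * (1 + (c ^+ 2 + 1) * g ^+ 2) * p| ^+ 2 + `|g * p| ^+ 2)
  = 4^-1 * (`|p| ^+ 2 * `|1 + c ^+ 2 * g ^+ 2| ^+ 2
      * (1 + `|g| ^+ 2 / `|1 + 'i * c * g| ^+ 2)
      * (1 + `|g| ^+ 2 / `|1 - 'i * c * g| ^+ 2)).
Proof.
move=> nz_plus nz_minus.
have w_factor : 1 + c ^+ 2 * g ^+ 2 = (1 + 'i * c * g) * (1 - 'i * c * g).
  by ring: (@sqrCi F).
have lift_norms_sum :
    `|1 + (c ^+ 2 - 1) * g ^+ 2| ^+ 2 + `|1 + (c ^+ 2 + 1) * g ^+ 2| ^+ 2
    = 2 * (`|1 + c ^+ 2 * g ^+ 2| ^+ 2 + `|g ^+ 2| ^+ 2).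
  rewrite addrC -normC_parallelogram.
  by congr (_ ^+ 2 + _ ^+ 2); congr `|_|; ring.
have factor_norms_sum : `|1 + 'i * c * g| ^+ 2 + `|1 - 'i * c * g| ^+ 2
    = 2 * (1 + `|c| ^+ 2 * `|g| ^+ 2).
  by rewrite -mulrA normC_parallelogram normr1 !normrM normCi mul1r exprMn expr1n.
move: lift_norms_sum factor_norms_sum.
rewrite w_factor !normrM normCi normfV normr_nat mul1r !exprMn.
set A := `|1 + 'i * c * g| ^+ 2; set B := `|1 - 'i * c * g| ^+ 2.
(* only the two sums of squared norms matter: solve them for one summand *)
move=> /(canRL (addKr _)) -> /(canRL (addKr _)) B_eq.
have nzA : A != 0 by rewrite sqrf_eq0 normr_eq0.
have nzB : B != 0 by rewrite sqrf_eq0 normr_eq0.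
rewrite B_eq in nzB *.
by field; rewrite exprMn nzA nzB.
Qed.
End LiftedCurve.

Section Holomorphic.
Context {R : realType}.
Implicit Types (U : set (C R)) (f g F G : C R -> C R) (k : C R).

Lemma holomorphic_onD {U f g} : holomorphic_on U f -> holomorphic_on U g ->
  holomorphic_on U (fun z => f z + g z).
Proof. by move=> hf hg z Uz; apply: derivableD; [exact: hf | exact: hg]. Qed.

Lemma holomorphic_onB {U f g} : holomorphic_on U f -> holomorphic_on U g ->
  holomorphic_on U (fun z => f z - g z).
Proof. by move=> hf hg z Uz; apply: derivableB; [exact: hf | exact: hg]. Qed.

Lemma holomorphic_onZ {U} k {f} : holomorphic_on U f ->
  holomorphic_on U (fun z => k * f z).
Proof. by move=> hf z Uz; apply: derivableZ; exact: hf. Qed.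

Lemma primitive_onD {U F G f g} : primitive_on U F f -> primitive_on U G g ->
  primitive_on U (fun z => F z + G z) (fun z => f z + g z).
Proof. by move=> hf hg z Uz; apply: is_deriveD; [exact: hf | exact: hg]. Qed.

Lemma primitive_onB {U F G f g} : primitive_on U F f -> primitive_on U G g ->
  primitive_on U (fun z => F z - G z) (fun z => f z - g z).
Proof. by move=> hf hg z Uz; apply: is_deriveB; [exact: hf | exact: hg]. Qed.

Lemma primitive_onZ {U} k {F f} : primitive_on U F f ->
  primitive_on U (fun z => k * F z) (fun z => k * f z).
Proof. by move=> hf z Uz; apply: is_deriveZ; exact: hf. Qed.

Lemma holomorphic_on_continuous {U f} : holomorphic_on U f ->
  forall z, U z -> {for z, continuous f}.
Proof.
by move=> hf z Uz; apply/differentiable_continuous/derivable1_diffP; exact: hf.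
Qed.

Lemma weierstrass_null_on {U P} {G Psi phi1 phi2 phi3 : C R -> C R} : open U ->
  (forall z, U z -> \forall w \near z^', ~ P w) ->
  holomorphic_on U phi1 -> holomorphic_on U phi2 -> holomorphic_on U phi3 ->
  (forall z, (U `\` P) z ->
     [/\ phi1 z = 2^-1 * (1 - G z ^+ 2) * Psi z,
         phi2 z = 'i / 2 * (1 + G z ^+ 2) * Psi z &
         phi3 z = G z * Psi z]) ->
  forall z, U z -> phi1 z ^+ 2 + phi2 z ^+ 2 + phi3 z ^+ 2 = 0.
Proof.
move=> oU Pdisc hol1 hol2 hol3 phiE.
apply: (continuous_eq_off_discrete oU Pdisc) => [z Uz|z /phiE[-> -> ->]].
  have sqr_cont f :
      holomorphic_on U f -> {for z, continuous (fun w => f w ^+ 2)}.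
    by move=> /holomorphic_on_continuous/(_ z Uz) f_cont; exact: continuousM.
  exact: continuousD (continuousD (sqr_cont _ hol1) (sqr_cont _ hol2))
    (sqr_cont _ hol3).
exact: weierstrass_null.
Qed.

End Holomorphic.

Theorem theorem5p1 (R : realType) (U P : set (C R)) (G Psi : C R -> C R)
  (phi1 phi2 phi3 Phi1 Phi2 Phi3 : C R -> C R) (c : C R) :
  (* Sigma is parametrized by a conformal coordinate on a simply connected domain *)
  simply_connected_domain U ->
  (* Weierstrass data: G meromorphic (poles P), Psi dzeta holomorphic *)
  meromorphic_on U P G ->
  holomorphic_on U Psi ->
  (* the holomorphic curve phi given by the Weierstrass representation *)
  holomorphic_on U phi1 -> holomorphic_on U phi2 -> holomorphic_on U phi3 ->
  (forall z, (U `\` P) z ->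
     [/\ phi1 z = 2^-1 * (1 - G z ^+ 2) * Psi z,
         phi2 z = 'i / 2 * (1 + G z ^+ 2) * Psi z &
         phi3 z = G z * Psi z]) ->
  (* X = (Re \int phi1, Re \int phi2, Re \int phi3) *)
  primitive_on U Phi1 phi1 -> primitive_on U Phi2 phi2 ->
  primitive_on U Phi3 phi3 ->
  (* X is an immersion *)
  (forall z, U z -> ~ (phi1 z = 0 /\ phi2 z = 0 /\ phi3 z = 0)) ->
  (* Sigma is non-planar *)
  nonplanar3 U Phi1 Phi2 Phi3 ->
  exists ph0 ph1 ph2 ph3 Ph0 Ph1 Ph2 Ph3 : C R -> C R,
    [/\ (* the curve phi-hat (holomorphically extended across the poles of G) *)
        (forall z, (U `\` P) z ->
           [/\ ph0 z = c * G z ^+ 2 * Psi z,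
               ph1 z = 2^-1 * (1 + (c ^+ 2 - 1) * G z ^+ 2) * Psi z,
               ph2 z = 'i / 2 * (1 + (c ^+ 2 + 1) * G z ^+ 2) * Psi z &
               ph3 z = G z * Psi z]),
        ([/\ holomorphic_on U ph0, holomorphic_on U ph1,
            holomorphic_on U ph2 & holomorphic_on U ph3] /\
         (* X^c = (Re \int ph0, ..., Re \int ph3) *)
         [/\ primitive_on U Ph0 ph0, primitive_on U Ph1 ph1,
            primitive_on U Ph2 ph2 & primitive_on U Ph3 ph3]),
        (* X^c is a conformal harmonic immersion: phi-hat is a null curve
           without zeros *)
        (forall z, U z ->
           ph0 z ^+ 2 + ph1 z ^+ 2 + ph2 z ^+ 2 + ph3 z ^+ 2 = 0 /\
           ~ (ph0 z = 0 /\ ph1 z = 0 /\ ph2 z = 0 /\ ph3 z = 0)),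
        (* the induced metric *)
        (forall z, (U `\` P) z ->
           1 + 'i * c * G z != 0 -> 1 - 'i * c * G z != 0 ->
           induced_metric4 ph0 ph1 ph2 ph3 z =
             4^-1 * (`|Psi z| ^+ 2 * `|1 + c ^+ 2 * G z ^+ 2| ^+ 2
               * (1 + `|G z| ^+ 2 / `|1 + 'i * c * G z| ^+ 2)
               * (1 + `|G z| ^+ 2 / `|1 - 'i * c * G z| ^+ 2)))
        & ((forall z, U z -> ph0 z + c * ph1 z + 'i * c * ph2 z = 0) /\
           degenerate4 U ph0 ph1 ph2 ph3)].
Proof.
move=> [oU _ _ _] [_ Pdisc _ _] _ hol1 hol2 hol3 phiE prim1 prim2 prim3 phi_neq0 _.
pose s z := phi1 z + 'i * phi2 z.
pose S z := Phi1 z + 'i * Phi2 z.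
have hol_s : holomorphic_on U s := holomorphic_onD hol1 (holomorphic_onZ 'i hol2).
have prim_s : primitive_on U S s := primitive_onD prim1 (primitive_onZ 'i prim2).
have phi_null := weierstrass_null_on oU Pdisc hol1 hol2 hol3 phiE.
have liftE z : (U `\` P) z -> [/\ - c * s z = c * G z ^+ 2 * Psi z,
    phi1 z - c ^+ 2 / 2 * s z = 2^-1 * (1 + (c ^+ 2 - 1) * G z ^+ 2) * Psi z,
    phi2 z - 'i * c ^+ 2 / 2 * s z = 'i / 2 * (1 + (c ^+ 2 + 1) * G z ^+ 2) * Psi z &
    phi3 z = G z * Psi z].
  by move=> /phiE[e1 e2 e3]; have [? ? ?] := lift_weierstrass c e1 e2.
exists (fun z => - c * s z), (fun z => phi1 z - c ^+ 2 / 2 * s z),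
  (fun z => phi2 z - 'i * c ^+ 2 / 2 * s z), phi3,
  (fun z => - c * S z), (fun z => Phi1 z - c ^+ 2 / 2 * S z),
  (fun z => Phi2 z - 'i * c ^+ 2 / 2 * S z), Phi3.
split.
- exact: liftE.
- split; split.
  + exact: holomorphic_onZ.
  + exact: holomorphic_onB hol1 (holomorphic_onZ _ hol_s).
  + exact: holomorphic_onB hol2 (holomorphic_onZ _ hol_s).
  + exact: hol3.
  + exact: primitive_onZ.
  + exact: primitive_onB prim1 (primitive_onZ _ prim_s).
  + exact: primitive_onB prim2 (primitive_onZ _ prim_s).
  + exact: prim3.
- move=> z Uz; split; first by rewrite lift_sqr_sum phi_null.
  case=> _ [/lift_eq0 lift0 [/lift0 [phi1_0 phi2_0] phi3_0]].
  by apply: (phi_neq0 z Uz).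
- move=> z /liftE[e0 e1 e2 e3]; rewrite /induced_metric4 /= e0 e1 e2 e3.
  exact: lift_metric.
- split=> [z _|]; first exact: lift_degenerate.
  exists 1, c, ('i * c), 0; split=> [[/eqP]|z _]; first by rewrite oner_eq0.
  by rewrite mul1r mul0r addr0 lift_degenerate.
Qed.
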